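(* Let $\mathcal{S}\subseteq\mathcal{G}$, $t\in[T]$, $k\in[N]$. Let $\varepsilon\ge0$ and $D\ge1$ with $D\varepsilon\le1/6$. Suppose Assumption 1 holds and $\|A-\hat A\|\le\varepsilon$, $\|B_{\mathcal{S}}-\hat B_{\mathcal{S}}\|\le\varepsilon$, $\|P^{(t)}_{k,\mathcal{S}}-\hat P^{(t)}_{k,\mathcal{S}}\|\le D\varepsilon$. Then $$\|K^{(t)}_{k-1,\mathcal{S}}-\hat K^{(t)}_{k-1,\mathcal{S}}\|\le3\tilde\Gamma_{\mathcal{S}}^3D\varepsilon\quad\text{and}\quad\|P^{(t)}_{k-1,\mathcal{S}}-\hat P^{(t)}_{k-1,\mathcal{S}}\|\le20\tilde\Gamma_{\mathcal{S}}^9\sigma_RD\varepsilon.$$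
   Context: $A\in\mathbb{R}^{n\times n}$, $B=[B_1\ \cdots\ B_q]\in\mathbb{R}^{n\times m}$ with $B_i\in\mathbb{R}^{n\times m_i}$, actuator set $\mathcal{G}=\{1,\dots,q\}$; for $\mathcal{S}=\{i_1<\dots<i_H\}$, $B_{\mathcal{S}}=[B_{i_1}\ \cdots\ B_{i_H}]$. Horizon $N\ge1$, rounds $T\ge1$; for each $t\in[T]$: $Q^{(t)},Q_f^{(t)}\in\mathbb{S}^n_+$, $R^{(t)}\in\mathbb{S}^m_{++}$, $R^{(t)}_{\mathcal{S}}$ the principal submatrix for the input coordinates of actuators in $\mathcal{S}$. Riccati recursion: $P^{(t)}_{N,\mathcal{S}}=Q_f^{(t)}$, and for $k=N-1,\dots,0$: $K^{(t)}_{k,\mathcal{S}}=-(B_{\mathcal{S}}^\top P^{(t)}_{k+1,\mathcal{S}}B_{\mathcal{S}}+R^{(t)}_{\mathcal{S}})^{-1}B_{\mathcal{S}}^\top P^{(t)}_{k+1,\mathcal{S}}A$, $P^{(t)}_{k,\mathcal{S}}=Q^{(t)}+A^\top P^{(t)}_{k+1,\mathcal{S}}A-A^\top P^{(t)}_{k+1,\mathcal{S}}B_{\mathcal{S}}(B_{\mathcal{S}}^\top P^{(t)}_{k+1,\mathcal{S}}B_{\mathcal{S}}+R^{(t)}_{\mathcal{S}})^{-1}B_{\mathcal{S}}^\top P^{(t)}_{k+1,\mathcal{S}}A$. For estimates $\hat A,\hat B_{\mathcal{S}}$, $\hat P^{(t)}_{k,\mathcal{S}},\hat K^{(t)}_{k,\mathcal{S}}$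 are defined by the same recursion with $(A,B_{\mathcal{S}})$ replaced by $(\hat A,\hat B_{\mathcal{S}})$. $\Gamma^{(t)}_{k,\mathcal{S}}=\max\{\|A\|,\|B\|,\|P^{(t)}_{k,\mathcal{S}}\|,\|K^{(t)}_{k-1,\mathcal{S}}\|\}$ for $k\in[N]$, $\Gamma_{\mathcal{S}}=\max_{t\in[T],k\in[N]}\Gamma^{(t)}_{k,\mathcal{S}}$, $\tilde\Gamma_{\mathcal{S}}=1+\Gamma_{\mathcal{S}}$; $\sigma_R=\max_{t\in[T]}\sigma_1(R^{(t)})$; $\|\cdot\|$ spectral norm, singular values $\sigma_1\ge\sigma_2\ge\cdots$. Assumption 1: for all $t$, $Q_f^{(t)}\succ0$, $\sigma_n(Q^{(t)})\ge1$ and $\sigma_m(R^{(t)})\ge1$. *)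

From HB Require Import structures.
From mathcomp Require Import all_boot all_order all_algebra.
From mathcomp Require Import all_classical all_reals.
Set Implicit Arguments. Unset Strict Implicit. Unset Printing Implicit Defensive.
Import Order.TTheory GRing.Theory Num.Theory.
Local Open Scope classical_set_scope.
Local Open Scope ring_scope.

Section LQRDefs.
Variable R : realType.

Definition vnorm (n : nat) (x : 'cV[R]_n) : R :=
  Num.sqrt (\sum_(i < n) (x i 0) ^+ 2).

Definition specnorm (p n : nat) (M : 'M[R]_(p, n)) : R :=
  sup [set vnorm (M *m x) | x in [set x : 'cV[R]_n | vnorm x <= 1]].

Definition sigma_min (n : nat) (M : 'M[R]_n) : R :=
  inf [set vnorm (M *m x) | x in [set x : 'cV[R]_n | vnorm x = 1]].

Definition psd (n : nat) (M : 'M[R]_n) : Prop :=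
  M^T = M /\ forall x : 'cV[R]_n, 0 <= (x^T *m M *m x) 0 0.
Definition pd (n : nat) (M : 'M[R]_n) : Prop :=
  M^T = M /\ forall x : 'cV[R]_n, x != 0 -> 0 < (x^T *m M *m x) 0 0.

(* Actuator structure: input coordinate j of B belongs to actuator act j.
   S selects the input coordinates of the actuators in S. *)
Definition cols (m q : nat) (act : 'I_m -> 'I_q) (S : {set 'I_q}) : {set 'I_m} :=
  [set j : 'I_m | act j \in S].

(* B_S : the columns of B belonging to actuators in S, in increasing order *)
Definition Bsel (n m q : nat) (act : 'I_m -> 'I_q) (S : {set 'I_q})
  (B : 'M[R]_(n, m)) : 'M[R]_(n, #|cols act S|) :=
  \matrix_(i < n, j < #|cols act S|) B i (enum_val j).

Definition Rsel (m q : nat) (act : 'I_m -> 'I_q) (S : {set 'I_q})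
  (Rm : 'M[R]_m) : 'M[R]_(#|cols act S|) :=
  \matrix_(i < #|cols act S|, j < #|cols act S|) Rm (enum_val i) (enum_val j).

Definition rgain (n d : nat) (A : 'M[R]_n) (B : 'M[R]_(n, d)) (Rd : 'M[R]_d)
  (P : 'M[R]_n) : 'M[R]_(d, n) :=
  - (invmx (B^T *m P *m B + Rd) *m B^T *m P *m A).

Definition rstep (n d : nat) (A : 'M[R]_n) (B : 'M[R]_(n, d)) (Rd : 'M[R]_d)
  (Q : 'M[R]_n) (P : 'M[R]_n) : 'M[R]_n :=
  Q + A^T *m P *m A
    - A^T *m P *m B *m invmx (B^T *m P *m B + Rd) *m B^T *m P *m A.

(* P_k for horizon N: P_N = Qf, P_k = rstep P_{k+1}  (k <= N) *)
Fixpoint riter (n d : nat) (A : 'M[R]_n) (B : 'M[R]_(n, d)) (Rd : 'M[R]_d)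
  (Q Qf : 'M[R]_n) (j : nat) : 'M[R]_n :=
  match j with
  | 0 => Qf
  | j'.+1 => rstep A B Rd Q (riter A B Rd Q Qf j')
  end.

Definition Pric (n d : nat) (A : 'M[R]_n) (B : 'M[R]_(n, d)) (Rd : 'M[R]_d)
  (Q Qf : 'M[R]_n) (N k : nat) : 'M[R]_n :=
  riter A B Rd Q Qf (N - k).

Definition Kric (n d : nat) (A : 'M[R]_n) (B : 'M[R]_(n, d)) (Rd : 'M[R]_d)
  (Q Qf : 'M[R]_n) (N k : nat) : 'M[R]_(d, n) :=
  rgain A B Rd (Pric A B Rd Q Qf N k.+1).

Definition GammaS (n m q T N : nat) (act : 'I_m -> 'I_q) (S : {set 'I_q})
  (A : 'M[R]_n) (B : 'M[R]_(n, m)) (Q Qf : 'I_T -> 'M[R]_n)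
  (Rm : 'I_T -> 'M[R]_m) : R :=
  \big[Num.max/0]_(t < T) \big[Num.max/0]_(1 <= k < N.+1)
    Num.max (Num.max (specnorm A) (specnorm B))
      (Num.max (specnorm (Pric A (Bsel act S B) (Rsel act S (Rm t)) (Q t) (Qf t) N k))
               (specnorm (Kric A (Bsel act S B) (Rsel act S (Rm t)) (Q t) (Qf t) N k.-1))).

(* sigma_R = max_t sigma_1(R^t) = max_t ||R^t|| *)
Definition sigmaR (m T : nat) (Rm : 'I_T -> 'M[R]_m) : R :=
  \big[Num.max/0]_(t < T) specnorm (Rm t).

End LQRDefs.

(* Along the Riccati recursion every [P_k] is positive semidefinite, and [sigma_min R >= 1]
   makes [R_S >= I]; hence [M = B_S^T P B_S + R_S >= I] for the true and for the estimated
   data, and [|x| <= |M x|].  The gain [K = - M^-1 B_S^T P A] then satisfies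
   [Mh (K - Kh) = (Mh - M) K + (Bh^T Ph Ah - B^T P A)], and each product [X^T P Y] moves by at
   most [3 D eps (1 + Gamma)^2] when its three factors move by [D eps]; this bounds [K - Kh].
   Writing the Riccati step as [P_(k-1) = Q + A^T P A + (A^T P B) K] reduces the second bound
   to the first: [D eps <= 1/6] keeps [|Kh| <= 2 (1 + Gamma)^3], and the factor
   [sigma_R >= 1] is slack. *)

From HB Require Import structures.
From mathcomp Require Import all_boot all_order all_algebra.
From mathcomp Require Import all_classical all_reals.
From mathcomp Require Import ring lra zify.
Import Order.TTheory GRing.Theory Num.Theory.
Set Implicit Arguments. Unset Strict Implicit. Unset Printing Implicit Defensive.
Local Open Scope classical_set_scope.
Local Open Scope ring_scope.

Section EuclideanNorm.
Variable R : realType.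
Implicit Types a b : R.

Definition dot n (x y : 'cV[R]_n) : R := \sum_(i < n) x i 0 * y i 0.

Lemma dotE n (x y : 'cV[R]_n) : (x^T *m y) 0 0 = dot x y.
Proof. by rewrite mxE; apply: eq_bigr => i _; rewrite mxE. Qed.

Lemma dotC n (x y : 'cV[R]_n) : dot x y = dot y x.
Proof. by apply: eq_bigr => i _; rewrite mulrC. Qed.

Lemma dotDl n (x y z : 'cV[R]_n) : dot (x + y) z = dot x z + dot y z.
Proof. by rewrite /dot -big_split; apply: eq_bigr => i _; rewrite mxE mulrDl. Qed.

Lemma dotDr n (x y z : 'cV[R]_n) : dot z (x + y) = dot z x + dot z y.
Proof. by rewrite dotC dotDl !(dotC z). Qed.

Lemma dotZl n a (x z : 'cV[R]_n) : dot (a *: x) z = a * dot x z.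
Proof. by rewrite /dot mulr_sumr; apply: eq_bigr => i _; rewrite mxE mulrA. Qed.

Lemma dotZr n a (x z : 'cV[R]_n) : dot z (a *: x) = a * dot z x.
Proof. by rewrite dotC dotZl dotC. Qed.

Lemma dotNr n (x z : 'cV[R]_n) : dot z (- x) = - dot z x.
Proof. by rewrite -scaleN1r dotZr mulN1r. Qed.

Lemma dot_trmx p n (M : 'M[R]_(p, n)) w x : dot w (M *m x) = dot (M^T *m w) x.
Proof. by rewrite -!dotE trmx_mul trmxK mulmxA. Qed.

Lemma dot_ge0 n (x : 'cV[R]_n) : 0 <= dot x x.
Proof. by apply: sumr_ge0 => i _; rewrite -expr2 sqr_ge0. Qed.

(* Lagrange's identity: the defect in Cauchy-Schwarz is a sum of squares. *)
Lemma dot_sqr_le n (x y : 'cV[R]_n) : dot x y ^+ 2 <= dot x x * dot y y.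
Proof.
have lagrange : \sum_(i < n) \sum_(j < n) (x i 0 * y j 0 - x j 0 * y i 0) ^+ 2
    = 2 * (dot x x * dot y y) - 2 * dot x y ^+ 2.
  have E1 : dot x x * dot y y
      = \sum_(i < n) \sum_(j < n) x i 0 * x i 0 * (y j 0 * y j 0).
    by rewrite /dot mulr_suml; apply: eq_bigr => i _; rewrite mulr_sumr.
  have E2 : dot x x * dot y y
      = \sum_(i < n) \sum_(j < n) x j 0 * x j 0 * (y i 0 * y i 0).
    by rewrite E1 exchange_big.
  have E3 : dot x y ^+ 2 = \sum_(i < n) \sum_(j < n) x i 0 * y i 0 * (x j 0 * y j 0).
    by rewrite expr2 /dot mulr_suml; apply: eq_bigr => i _; rewrite mulr_sumr.
  rewrite mulr2n mulrDl mul1r {1}E1 E2 E3 mulr_sumr -big_split -sumrN -big_split.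
  apply: eq_bigr => i _ /=.
  rewrite mulr_sumr -big_split -sumrN -big_split; apply: eq_bigr => j _ /=.
  by ring.
have : 0 <= \sum_(i < n) \sum_(j < n) (x i 0 * y j 0 - x j 0 * y i 0) ^+ 2.
  by apply: sumr_ge0 => i _; apply: sumr_ge0 => j _; rewrite sqr_ge0.
rewrite lagrange; lra.
Qed.

Lemma vnormE n (x : 'cV[R]_n) : vnorm x = Num.sqrt (dot x x).
Proof. by congr Num.sqrt; apply: eq_bigr => i _; rewrite expr2. Qed.

Lemma vnorm_ge0 n (x : 'cV[R]_n) : 0 <= vnorm x.
Proof. by rewrite vnormE sqrtr_ge0. Qed.

Lemma vnorm_sqr n (x : 'cV[R]_n) : vnorm x ^+ 2 = dot x x.
Proof. by rewrite vnormE sqr_sqrtr // dot_ge0. Qed.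

Lemma ler_sqr a b : 0 <= b -> a ^+ 2 <= b ^+ 2 -> a <= b.
Proof.
move=> b0 ab; apply: le_trans (ler_norm a) _.
by rewrite -(ler_pXn2r (isT : 0 < 2)%N) ?nnegrE ?normr_ge0 // real_normK ?num_real.
Qed.

Lemma dot_le_vnorm n (x y : 'cV[R]_n) : dot x y <= vnorm x * vnorm y.
Proof.
by apply: ler_sqr; rewrite ?mulr_ge0 ?vnorm_ge0 // exprMn !vnorm_sqr dot_sqr_le.
Qed.

Lemma vnormD n (x y : 'cV[R]_n) : vnorm (x + y) <= vnorm x + vnorm y.
Proof.
apply: ler_sqr; first by rewrite addr_ge0 ?vnorm_ge0.
rewrite vnorm_sqr dotDl !dotDr sqrrD !vnorm_sqr (dotC y x).
have := dot_le_vnorm x y; lra.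
Qed.

Lemma vnormZ n a (x : 'cV[R]_n) : vnorm (a *: x) = `|a| * vnorm x.
Proof.
by rewrite !vnormE dotZl dotZr mulrA -expr2 sqrtrM ?sqr_ge0 // sqrtr_sqr.
Qed.

Lemma vnorm0 n : vnorm (0 : 'cV[R]_n) = 0.
Proof. by rewrite -(scale0r (0 : 'cV[R]_n)) vnormZ normr0 mul0r. Qed.

Lemma vnorm_eq0 n (x : 'cV[R]_n) : vnorm x = 0 -> x = 0.
Proof.
move=> x0; have /eqP : dot x x = 0 by rewrite -vnorm_sqr x0 expr0n.
rewrite psumr_eq0 => [/allP xx0|i _]; last by rewrite -expr2 sqr_ge0.
apply/matrixP => i j; rewrite (ord1 j) mxE.
by have := xx0 i (mem_index_enum _); rewrite -expr2 sqrf_eq0 => /eqP.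
Qed.

Lemma vnorm_gt0 n (x : 'cV[R]_n) : x != 0 -> 0 < vnorm x.
Proof.
by move=> x0; rewrite lt_def vnorm_ge0 andbT; apply: contra_neq x0 => /vnorm_eq0.
Qed.

End EuclideanNorm.

Section SpectralNorm.
Variable R : realType.

Definition frobenius p n (M : 'M[R]_(p, n)) : R :=
  Num.sqrt (\sum_(i < p) \sum_(j < n) M i j ^+ 2).

Lemma vnorm_mulmx_frobenius p n (M : 'M[R]_(p, n)) x :
  vnorm (M *m x) <= frobenius M * vnorm x.
Proof.
apply: ler_sqr; first by rewrite mulr_ge0 ?vnorm_ge0 ?sqrtr_ge0.
rewrite exprMn vnorm_sqr sqr_sqrtr; last first.
  by apply: sumr_ge0 => i _; apply: sumr_ge0 => j _; rewrite sqr_ge0.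
rewrite vnorm_sqr mulr_suml; apply: ler_sum => i _.
pose r : 'cV[R]_n := \col_j M i j.
have -> : (M *m x) i 0 * (M *m x) i 0 = dot r x ^+ 2.
  by rewrite expr2 mxE; congr (_ * _); apply: eq_bigr => j _; rewrite mxE.
apply: le_trans (dot_sqr_le r x) _; apply: ler_wpM2r; first exact: dot_ge0.
by apply: ler_sum => j _; rewrite mxE expr2.
Qed.

Let image_unit_ball p n (M : 'M[R]_(p, n)) :=
  [set vnorm (M *m x) | x in [set x : 'cV[R]_n | vnorm x <= 1]].

Let image_unit_ball_ubound p n (M : 'M[R]_(p, n)) : has_ubound (image_unit_ball M).
Proof.
exists (frobenius M) => _ [x /= x1 <-].
apply: le_trans (vnorm_mulmx_frobenius M x) _.
by rewrite -[leRHS]mulr1 ler_wpM2l ?sqrtr_ge0.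
Qed.

Lemma specnorm_ge0 p n (M : 'M[R]_(p, n)) : 0 <= specnorm M.
Proof.
apply: ub_le_sup (image_unit_ball_ubound M) _ _.
by exists 0; rewrite /= ?mulmx0 vnorm0.
Qed.

Lemma vnorm_mulmx_le p n (M : 'M[R]_(p, n)) x : vnorm (M *m x) <= specnorm M * vnorm x.
Proof.
have [->|x0] := eqVneq x 0; first by rewrite mulmx0 !vnorm0 mulr0.
have xpos := vnorm_gt0 x0.
have unit_x : vnorm ((vnorm x)^-1 *: x) <= 1.
  by rewrite vnormZ ger0_norm ?invr_ge0 ?vnorm_ge0 // mulVf ?gt_eqF.
have : image_unit_ball M (vnorm (M *m ((vnorm x)^-1 *: x))) by exists ((vnorm x)^-1 *: x).
move/(ub_le_sup (image_unit_ball_ubound M)).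
rewrite -scalemxAr vnormZ ger0_norm ?invr_ge0 ?vnorm_ge0 //.
by rewrite mulrC ler_pdivrMr.
Qed.

Lemma specnorm_le p n (M : 'M[R]_(p, n)) c :
  0 <= c -> (forall x, vnorm (M *m x) <= c * vnorm x) -> specnorm M <= c.
Proof.
move=> c0 Mc; apply: ge_sup; first by exists (vnorm (M *m 0)), 0; rewrite //= vnorm0.
move=> _ [x /= x1 <-]; apply: le_trans (Mc x) _.
by rewrite -[leRHS]mulr1 ler_wpM2l.
Qed.

Lemma specnormD p n (M N : 'M[R]_(p, n)) : specnorm (M + N) <= specnorm M + specnorm N.
Proof.
apply: specnorm_le => [|x]; first by rewrite addr_ge0 ?specnorm_ge0.
rewrite mulmxDl mulrDl; apply: le_trans (vnormD _ _) _.
by rewrite lerD ?vnorm_mulmx_le.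
Qed.

Lemma specnormM p n r (M : 'M[R]_(p, n)) (N : 'M[R]_(n, r)) :
  specnorm (M *m N) <= specnorm M * specnorm N.
Proof.
apply: specnorm_le => [|x]; first by rewrite mulr_ge0 ?specnorm_ge0.
rewrite -mulmxA -mulrA; apply: le_trans (vnorm_mulmx_le _ _) _.
by rewrite ler_wpM2l ?specnorm_ge0 ?vnorm_mulmx_le.
Qed.

Lemma specnormN p n (M : 'M[R]_(p, n)) : specnorm (- M) = specnorm M.
Proof.
have le_opp (X : 'M[R]_(p, n)) : specnorm (- X) <= specnorm X.
  apply: specnorm_le => [|x]; first exact: specnorm_ge0.
  by rewrite mulNmx -scaleN1r vnormZ normrN normr1 mul1r vnorm_mulmx_le.
by apply/eqP; rewrite eq_le le_opp /= -{1}[M]opprK le_opp.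
Qed.

Lemma specnormBC p n (M N : 'M[R]_(p, n)) : specnorm (M - N) = specnorm (N - M).
Proof. by rewrite -specnormN opprB. Qed.

Lemma specnorm_trmx p n (M : 'M[R]_(p, n)) : specnorm M^T <= specnorm M.
Proof.
apply: specnorm_le => [|y]; first exact: specnorm_ge0.
have [z0|z0] := eqVneq (M^T *m y) 0.
  by rewrite z0 vnorm0 mulr_ge0 ?specnorm_ge0 ?vnorm_ge0.
rewrite -(ler_pM2r (vnorm_gt0 z0)) -expr2 vnorm_sqr -dot_trmx.
rewrite mulrAC; apply: le_trans (dot_le_vnorm _ _) _.
by rewrite mulrC ler_wpM2r ?vnorm_ge0 ?vnorm_mulmx_le.
Qed.

Lemma specnorm_le_perturb p n (X X' : 'M[R]_(p, n)) g d :
  specnorm X <= g -> specnorm (X - X') <= d -> specnorm X' <= g + d.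
Proof.
move=> Xg dX; have -> : X' = X + - (X - X') by rewrite opprB addrC subrK.
by apply: le_trans (specnormD _ _) _; rewrite specnormN lerD.
Qed.

Lemma specnorm_mulmx_sub a b c (X X' : 'M[R]_(a, b)) (Y Y' : 'M[R]_(b, c)) :
  specnorm (X *m Y - X' *m Y')
    <= specnorm (X - X') * specnorm Y' + specnorm X * specnorm (Y - Y').
Proof.
have -> : X *m Y - X' *m Y' = (X - X') *m Y' + X *m (Y - Y').
  by rewrite mulmxBl mulmxBr [RHS]addrC addrA subrK.
by apply: le_trans (specnormD _ _) _; rewrite lerD ?specnormM.
Qed.

Lemma specnorm_mulmx3_sub a b c e (X X' : 'M[R]_(a, b)) (Y Y' : 'M[R]_(b, c))
    (Z Z' : 'M[R]_(c, e)) (g d : R) :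
  0 <= g -> 0 <= d -> d <= 1 ->
  specnorm X <= g -> specnorm Y <= g -> specnorm Z <= g ->
  specnorm (X - X') <= d -> specnorm (Y - Y') <= d -> specnorm (Z - Z') <= d ->
  specnorm (X *m Y *m Z - X' *m Y' *m Z') <= 3 * d * (1 + g) ^+ 2.
Proof.
move=> g0 d0 d1 Xg Yg Zg dX dY dZ.
have Y'g : specnorm Y' <= 1 + g.
  by rewrite addrC; apply: specnorm_le_perturb Yg (le_trans dY d1).
have Z'g : specnorm Z' <= 1 + g.
  by rewrite addrC; apply: specnorm_le_perturb Zg (le_trans dZ d1).
have YZ' : specnorm (Y' *m Z') <= (1 + g) ^+ 2.
  by apply: le_trans (specnormM _ _) _; rewrite expr2 ler_pM ?specnorm_ge0.
have YZ : specnorm (Y *m Z - Y' *m Z') <= 2 * d * (1 + g).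
  apply: le_trans (specnorm_mulmx_sub _ _ _ _) _.
  have : specnorm (Y - Y') * specnorm Z' <= d * (1 + g) by rewrite ler_pM ?specnorm_ge0.
  have : specnorm Y * specnorm (Z - Z') <= (1 + g) * d.
    by rewrite ler_pM ?specnorm_ge0 // (le_trans Yg) ?lerDr.
  lra.
rewrite -!mulmxA; apply: le_trans (specnorm_mulmx_sub _ _ _ _) _.
have : specnorm (X - X') * specnorm (Y' *m Z') <= d * (1 + g) ^+ 2.
  by rewrite ler_pM ?specnorm_ge0.
have : specnorm X * specnorm (Y *m Z - Y' *m Z') <= (1 + g) * (2 * d * (1 + g)).
  by rewrite ler_pM ?specnorm_ge0 // (le_trans Xg) ?lerDr.
rewrite expr2; lra.
Qed.

End SpectralNorm.

Section QuadraticForms.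
Variable R : realType.

Definition qf n (M : 'M[R]_n) (x : 'cV[R]_n) : R := dot x (M *m x).

Definition qf_nneg n (M : 'M[R]_n) : Prop := forall x, 0 <= qf M x.

(* [M >= I] as a quadratic form; no symmetry is assumed. *)
Definition qf_geI n (M : 'M[R]_n) : Prop := forall x, vnorm x ^+ 2 <= qf M x.

Lemma qfE n (M : 'M[R]_n) x : (x^T *m M *m x) 0 0 = qf M x.
Proof. by rewrite -mulmxA dotE. Qed.

Lemma psd_qf_nneg n (M : 'M[R]_n) : psd M -> qf_nneg M.
Proof. by move=> [_ M0] x; rewrite -qfE. Qed.

Lemma pd_qf_nneg n (M : 'M[R]_n) : pd M -> qf_nneg M.
Proof.
move=> [_ M0] x; have [->|x0] := eqVneq x 0; last by rewrite -qfE ltW ?M0.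
by rewrite /qf mulmx0 dot_ge0.
Qed.

Lemma qfD n (M N : 'M[R]_n) x : qf (M + N) x = qf M x + qf N x.
Proof. by rewrite /qf mulmxDl dotDr. Qed.

Lemma qf_congr n d (B : 'M[R]_(n, d)) P x : qf (B^T *m P *m B) x = qf P (B *m x).
Proof. by rewrite /qf -!mulmxA dot_trmx trmxK. Qed.

Lemma qf_geI_congr_add n d (B : 'M[R]_(n, d)) P Rd :
  qf_nneg P -> qf_geI Rd -> qf_geI (B^T *m P *m B + Rd).
Proof. by move=> P0 RdI x; rewrite qfD qf_congr; have := P0 (B *m x); have := RdI x; lra. Qed.

Lemma qf_geI_vnorm_le n (M : 'M[R]_n) x : qf_geI M -> vnorm x <= vnorm (M *m x).
Proof.
move=> MI; have [->|x0] := eqVneq x 0; first by rewrite vnorm0 vnorm_ge0.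
rewrite -(ler_pM2l (vnorm_gt0 x0)) -expr2.
exact: le_trans (MI x) (dot_le_vnorm _ _).
Qed.

Lemma qf_geI_specnorm_le n p (M : 'M[R]_n) (X : 'M[R]_(n, p)) :
  qf_geI M -> specnorm X <= specnorm (M *m X).
Proof.
move=> MI; apply: specnorm_le => [|x]; first exact: specnorm_ge0.
by apply: le_trans (qf_geI_vnorm_le _ MI) _; rewrite mulmxA vnorm_mulmx_le.
Qed.

Lemma mulmx_inj_unitmx n (M : 'M[R]_n) :
  (forall x : 'cV[R]_n, M *m x = 0 -> x = 0) -> M \in unitmx.
Proof.
move=> Minj; rewrite -unitmx_tr -row_free_unit -kermx_eq0; apply/eqP/matrixP => i j.
have /Minj : M *m (row i (kermx M^T))^T = 0.
  by rewrite -{1}[M]trmxK -trmx_mul -row_mul mulmx_ker row0 trmx0.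
by move/matrixP/(_ j 0); rewrite !mxE.
Qed.

Lemma vnorm_le_mulmx_unitmx n (M : 'M[R]_n) :
  (forall x, vnorm x <= vnorm (M *m x)) -> M \in unitmx.
Proof.
move=> Mx; apply: mulmx_inj_unitmx => x Mx0; apply: vnorm_eq0; apply/eqP.
by rewrite eq_le vnorm_ge0 andbT -(vnorm0 R n) -Mx0 Mx.
Qed.

Lemma qf_geI_unitmx n (M : 'M[R]_n) : qf_geI M -> M \in unitmx.
Proof. by move=> MI; apply: vnorm_le_mulmx_unitmx => x; apply: qf_geI_vnorm_le. Qed.

Lemma qf_cauchy_schwarz n (M : 'M[R]_n) x y :
  M^T = M -> qf_nneg M -> 0 < qf M y -> dot x (M *m y) ^+ 2 <= qf M x * qf M y.
Proof.
move=> Msym M0 y0; set b := dot x (M *m y); set c := qf M y.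
have yx : dot y (M *m x) = b by rewrite dot_trmx Msym dotC.
have := M0 (c *: x - b *: y).
rewrite /qf mulmxDr mulmxN -!scalemxAr dotDl !dotDr !dotNr.
rewrite -scaleNr !dotZl !dotZr -/b yx -/(qf M x) -/(qf M y) -/c.
move=> h; have : 0 <= c * (qf M x * c - b ^+ 2) by nra.
by rewrite pmulr_rge0 // subr_ge0.
Qed.

End QuadraticForms.

Section SmallestSingularValue.
Variable R : realType.
Variable m : nat.
Implicit Type M : 'M[R]_m.

Lemma sigma_min_ge1_vnorm M y : 1 <= sigma_min M -> vnorm y <= vnorm (M *m y).
Proof.
move=> M1; have [->|y0] := eqVneq y 0; first by rewrite vnorm0 vnorm_ge0.
set u := (vnorm y)^-1 *: y.
have u1 : vnorm u = 1.
  by rewrite vnormZ ger0_norm ?invr_ge0 ?vnorm_ge0 // mulVf ?gt_eqF ?vnorm_gt0.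
have lb : has_lbound [set vnorm (M *m x) | x in [set x : 'cV[R]_m | vnorm x = 1]].
  by exists 0 => _ [x _ <-]; apply: vnorm_ge0.
have : sigma_min M <= vnorm (M *m u) by apply: (ge_inf lb); exists u.
rewrite -scalemxAr vnormZ ger0_norm ?invr_ge0 ?vnorm_ge0 // => /(le_trans M1).
by rewrite mulrC ler_pdivlMr ?vnorm_gt0 // mul1r.
Qed.

Lemma sigma_min_ge1_specnorm M : 1 <= sigma_min M -> 1 <= specnorm M.
Proof.
move=> M1; have [y y1] : exists y : 'cV[R]_m, vnorm y = 1.
  apply: contrapT => no_unit; move: M1; rewrite /sigma_min.
  suff -> : [set vnorm (M *m x) | x in [set x : 'cV[R]_m | vnorm x = 1]] = set0.
    by rewrite inf0 ler10.
  by apply/seteqP; split => // z [x x1 _]; apply: no_unit; exists x.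
by have := le_trans (sigma_min_ge1_vnorm y M1) (vnorm_mulmx_le M y); rewrite y1 mulr1.
Qed.

(* With [w = M^-1 x]: [|x|^2 = <x, M w>] and [<w, M w> = <w, x> <= |w| |x| <= |x|^2], so
   Cauchy-Schwarz for the form of [M] gives [|x|^4 <= <x, M x> |x|^2]. *)
Lemma pd_sigma_min_qf_geI M : pd M -> 1 <= sigma_min M -> qf_geI M.
Proof.
move=> Mpd M1 x; have [->|x0] := eqVneq x 0; first by rewrite vnorm0 expr0n pd_qf_nneg.
have Minj y : vnorm y <= vnorm (M *m y) := sigma_min_ge1_vnorm y M1.
have Mu := vnorm_le_mulmx_unitmx Minj.
set w := invmx M *m x; have Mw : M *m w = x by rewrite mulKVmx.
have w0 : w != 0 by apply: contra_neq x0 => w0; rewrite -Mw w0 mulmx0.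
have ww : 0 < qf M w by case: Mpd => _ Mpos; rewrite -qfE Mpos.
have wx : qf M w <= vnorm x ^+ 2.
  rewrite /qf Mw expr2; apply: le_trans (dot_le_vnorm _ _) _.
  by rewrite ler_wpM2r ?vnorm_ge0 // -{1}Mw Minj.
have := qf_cauchy_schwarz x Mpd.1 (pd_qf_nneg Mpd) ww.
rewrite Mw -vnorm_sqr => cs.
have xx : 0 < vnorm x ^+ 2 by rewrite exprn_gt0 ?vnorm_gt0.
rewrite -(ler_pM2l xx) -expr2.
by apply: le_trans cs _; rewrite mulrC ler_wpM2r ?pd_qf_nneg.
Qed.

End SmallestSingularValue.

Section ActuatorSelection.
Variables (R : realType) (m q : nat) (act : 'I_m -> 'I_q) (S : {set 'I_q}).

Definition selmx : 'M[R]_(m, #|cols act S|) :=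
  \matrix_(j < m, i < #|cols act S|) (enum_val i == j)%:R.

Let sum_delta (T : finType) (a : T) (F : T -> R) : \sum_j (a == j)%:R * F j = F a.
Proof.
rewrite (bigD1 a) //= eqxx mul1r big1 ?addr0 // => j /negbTE.
by rewrite eq_sym => ->; rewrite mul0r.
Qed.

Lemma Bsel_selmx n (B : 'M[R]_(n, m)) : Bsel act S B = B *m selmx.
Proof.
apply/matrixP => r i; rewrite !mxE.
by under eq_bigr do rewrite mxE mulrC; rewrite sum_delta.
Qed.

Lemma Rsel_selmx (Rm : 'M[R]_m) : Rsel act S Rm = selmx^T *m Rm *m selmx.
Proof.
rewrite -mulmxA -Bsel_selmx; apply/matrixP => r i; rewrite !mxE.
by under eq_bigr do rewrite !mxE; rewrite sum_delta.
Qed.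

Lemma trmx_selmx_mul : selmx^T *m selmx = 1%:M.
Proof.
apply/matrixP => i i'; rewrite !mxE.
by under eq_bigr do rewrite !mxE; rewrite sum_delta (inj_eq enum_val_inj) eq_sym.
Qed.

Lemma vnorm_selmx x : vnorm (selmx *m x) = vnorm x.
Proof. by rewrite !vnormE dot_trmx mulmxA trmx_selmx_mul mul1mx. Qed.

Lemma specnorm_Bsel n (B : 'M[R]_(n, m)) : specnorm (Bsel act S B) <= specnorm B.
Proof.
apply: specnorm_le => [|x]; first exact: specnorm_ge0.
by rewrite Bsel_selmx -mulmxA -(vnorm_selmx x) vnorm_mulmx_le.
Qed.

Lemma qf_geI_Rsel (Rm : 'M[R]_m) : qf_geI Rm -> qf_geI (Rsel act S Rm).
Proof. by move=> RmI x; rewrite Rsel_selmx qf_congr -(vnorm_selmx x). Qed.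

End ActuatorSelection.

Section RiccatiStep.
Variables (R : realType) (n d : nat).
Variables (A Q : 'M[R]_n) (B : 'M[R]_(n, d)) (Rd : 'M[R]_d).

Lemma mulmx_rgain P : B^T *m P *m B + Rd \in unitmx ->
  (B^T *m P *m B + Rd) *m rgain A B Rd P = - (B^T *m P *m A).
Proof. by move=> Mu; rewrite /rgain mulmxN !mulmxA mulmxV // mul1mx. Qed.

Lemma rstepE P : rstep A B Rd Q P = Q + A^T *m P *m A + A^T *m P *m B *m rgain A B Rd P.
Proof. by rewrite /rstep /rgain mulmxN !mulmxA. Qed.

(* Completing the square, using [(B^T P B + Rd) K = - B^T P A]. *)
Lemma qf_rstep P x : B^T *m P *m B + Rd \in unitmx ->
  let v := rgain A B Rd P *m x in
  qf (rstep A B Rd Q P) x = qf Q x + qf P (A *m x + B *m v) + qf Rd v.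
Proof.
move=> /mulmx_rgain MK v; set a := A *m x.
have Mv : qf (B^T *m P *m B + Rd) v = - dot (B *m v) (P *m a).
  by rewrite /qf {2}/v mulmxA MK mulNmx dotNr -!mulmxA (dot_trmx B^T) trmxK.
have cross : qf (A^T *m P *m B *m rgain A B Rd P) x = dot a (P *m (B *m v)).
  by rewrite /qf -!mulmxA (dot_trmx A^T) trmxK.
have expand : qf P (a + B *m v)
    = qf P a + dot a (P *m (B *m v)) + dot (B *m v) (P *m a) + qf P (B *m v).
  by rewrite /qf mulmxDr !dotDl !dotDr !addrA.
move: Mv; rewrite qfD qf_congr rstepE !qfD qf_congr cross expand; lra.
Qed.

Lemma rstep_qf_nneg P :
  qf_nneg Q -> qf_nneg P -> qf_geI Rd -> qf_nneg (rstep A B Rd Q P).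
Proof.
move=> Q0 P0 RdI x.
rewrite qf_rstep; last exact/qf_geI_unitmx/qf_geI_congr_add.
by rewrite !addr_ge0 // (le_trans (sqr_ge0 _) (RdI _)).
Qed.

Lemma riter_qf_nneg Qf j :
  qf_nneg Q -> qf_nneg Qf -> qf_geI Rd -> qf_nneg (riter A B Rd Q Qf j).
Proof. by move=> Q0 Qf0 RdI; elim: j => [|j IHj] //=; apply: rstep_qf_nneg. Qed.

End RiccatiStep.

Section RiccatiIndex.
Variables (R : realType) (n d : nat).
Variables (A Q Qf : 'M[R]_n) (B : 'M[R]_(n, d)) (Rd : 'M[R]_d) (N k : nat).

Lemma Kric_pred : (0 < k)%N -> Kric A B Rd Q Qf N k.-1 = rgain A B Rd (Pric A B Rd Q Qf N k).
Proof. by move=> k0; rewrite /Kric prednK. Qed.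

Lemma Pric_pred : (0 < k <= N)%N ->
  Pric A B Rd Q Qf N k.-1 = rstep A B Rd Q (Pric A B Rd Q Qf N k).
Proof. by move=> /andP[k0 kN]; rewrite /Pric (_ : N - k.-1 = (N - k).+1)%N //; lia. Qed.

End RiccatiIndex.

Section RiccatiPerturbation.
Variables (R : realType) (n d : nat).
Variables (A Ah Q P Ph : 'M[R]_n) (B Bh : 'M[R]_(n, d)) (Rd : 'M[R]_d) (g e : R).
Hypotheses (RdI : qf_geI Rd) (P0 : qf_nneg P) (Ph0 : qf_nneg Ph).
Hypotheses (Ag : specnorm A <= g) (Bg : specnorm B <= g) (Pg : specnorm P <= g).
Hypothesis Kg : specnorm (rgain A B Rd P) <= g.
Hypotheses (e0 : 0 <= e) (e6 : e <= 1 / 6).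
Hypotheses (dA : specnorm (A - Ah) <= e) (dB : specnorm (B - Bh) <= e).
Hypothesis dP : specnorm (P - Ph) <= e.

Let specnorm_congr_sub p r (X Xh : 'M[R]_(n, p)) (Y Yh : 'M[R]_(n, r)) :
  specnorm X <= g -> specnorm (X - Xh) <= e -> specnorm Y <= g -> specnorm (Y - Yh) <= e ->
  specnorm (X^T *m P *m Y - Xh^T *m Ph *m Yh) <= 3 * e * (1 + g) ^+ 2.
Proof.
move=> Xg dX Yg dY; have e1 : e <= 1 by move: e6; lra.
have g0 : 0 <= g := le_trans (specnorm_ge0 A) Ag.
apply: (specnorm_mulmx3_sub g0 e0 e1) => //.
- exact: le_trans (specnorm_trmx X) Xg.
- by rewrite -linearB; apply: le_trans (specnorm_trmx _) dX.
Qed.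

Lemma rgain_perturbation :
  specnorm (rgain A B Rd P - rgain Ah Bh Rd Ph) <= 3 * (1 + g) ^+ 3 * e.
Proof.
set K := rgain A B Rd P; set Kh := rgain Ah Bh Rd Ph.
set M := B^T *m P *m B + Rd; set Mh := Bh^T *m Ph *m Bh + Rd.
have MhI : qf_geI Mh := qf_geI_congr_add Bh Ph0 RdI.
have MK : M *m K = - (B^T *m P *m A).
  exact/mulmx_rgain/qf_geI_unitmx/qf_geI_congr_add.
have MhKh : Mh *m Kh = - (Bh^T *m Ph *m Ah) by apply/mulmx_rgain/qf_geI_unitmx.
have gain_eqn : Mh *m (K - Kh)
    = (Mh - M) *m K + (Bh^T *m Ph *m Ah - B^T *m P *m A).
  by rewrite mulmxBr mulmxBl MhKh MK !opprK addrACA subrr addr0.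
have dM : specnorm (Mh - M) <= 3 * e * (1 + g) ^+ 2.
  by rewrite specnormBC /M /Mh opprD addrACA subrr addr0 specnorm_congr_sub.
have dN : specnorm (Bh^T *m Ph *m Ah - B^T *m P *m A) <= 3 * e * (1 + g) ^+ 2.
  by rewrite specnormBC specnorm_congr_sub.
have dMK : specnorm ((Mh - M) *m K) <= 3 * e * (1 + g) ^+ 2 * g.
  by apply: le_trans (specnormM _ _) _; rewrite ler_pM ?specnorm_ge0.
apply: le_trans (qf_geI_specnorm_le _ MhI) _; rewrite gain_eqn.
apply: le_trans (specnormD _ _) _.
have -> : 3 * (1 + g) ^+ 3 * e = 3 * e * (1 + g) ^+ 2 * g + 3 * e * (1 + g) ^+ 2 by ring.
exact: lerD.
Qed.

Lemma rstep_perturbation :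
  specnorm (rstep A B Rd Q P - rstep Ah Bh Rd Q Ph) <= 12 * (1 + g) ^+ 9 * e.
Proof.
set K := rgain A B Rd P; set Kh := rgain Ah Bh Rd Ph; set G := 1 + g.
have G1 : 1 <= G by rewrite /G lerDl (le_trans (specnorm_ge0 A)).
have gG : g <= G by rewrite /G lerDr.
have powG i j : (i <= j)%N -> G ^+ i <= G ^+ j := fun le_ij => ler_weXn2l G1 le_ij.
have dK : specnorm (K - Kh) <= 3 * G ^+ 3 * e := rgain_perturbation.
have Khg : specnorm Kh <= 2 * G ^+ 3.
  apply: le_trans (specnorm_le_perturb Kg dK) _.
  have : G <= G ^+ 3 by rewrite -[leLHS]expr1; exact: powG.
  have : 0 <= G ^+ 3 by rewrite exprn_ge0 // (le_trans ler01).
  move: e6 gG; nra.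
have Yg : specnorm (A^T *m P *m B) <= G ^+ 3.
  apply: le_trans (specnormM _ _) _; rewrite exprS expr2 mulrC.
  rewrite ler_pM ?specnorm_ge0 ?(le_trans Bg) //.
  apply: le_trans (specnormM _ _) _; rewrite ler_pM ?specnorm_ge0 //.
    exact: le_trans (specnorm_trmx A) (le_trans Ag gG).
  exact: le_trans Pg gG.
have dX : specnorm (A^T *m P *m A - Ah^T *m Ph *m Ah) <= 3 * e * G ^+ 2.
  exact: specnorm_congr_sub.
have dY : specnorm (A^T *m P *m B - Ah^T *m Ph *m Bh) <= 3 * e * G ^+ 2.
  exact: specnorm_congr_sub.
have dYK : specnorm (A^T *m P *m B *m K - Ah^T *m Ph *m Bh *m Kh)
    <= 3 * e * G ^+ 2 * (2 * G ^+ 3) + G ^+ 3 * (3 * G ^+ 3 * e).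
  apply: le_trans (specnorm_mulmx_sub _ _ _ _) _.
  by rewrite lerD ?ler_pM ?specnorm_ge0.
have regroup (a b b' c c' : 'M[R]_n) : a + b + c - (a + b' + c') = (b - b') + (c - c').
  by rewrite opprD opprD addrACA (addrACA a b) subrr add0r.
rewrite !rstepE regroup.
apply: le_trans (specnormD _ _) _; apply: le_trans (lerD dX dYK) _.
have := powG 2%N 9%N isT; have := powG 5%N 9%N isT; have := powG 6%N 9%N isT.
move: e0; nra.
Qed.

End RiccatiPerturbation.

Section HorizonConstants.
Variables (R : realType) (n m q T N : nat) (act : 'I_m -> 'I_q) (S : {set 'I_q}).
Variables (A : 'M[R]_n) (B : 'M[R]_(n, m)) (Q Qf : 'I_T -> 'M[R]_n) (Rm : 'I_T -> 'M[R]_m).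

Lemma GammaS_ub t k : (1 <= k <= N)%N ->
  let g := GammaS N act S A B Q Qf Rm in
  let P := Pric A (Bsel act S B) (Rsel act S (Rm t)) (Q t) (Qf t) N in
  let K := Kric A (Bsel act S B) (Rsel act S (Rm t)) (Q t) (Qf t) N in
  [/\ specnorm A <= g, specnorm B <= g, specnorm (P k) <= g & specnorm (K k.-1) <= g].
Proof.
move=> k1N g P K.
have : Num.max (Num.max (specnorm A) (specnorm B))
    (Num.max (specnorm (P k)) (specnorm (K k.-1))) <= g.
  have k_in : k \in index_iota 1 N.+1 by rewrite mem_index_iota ltnS.
  by apply: le_trans (le_bigmax _ _ t); apply: le_trans _ (le_bigmax_seq _ _ _ _ k_in isT).
by rewrite !ge_max => /andP[/andP[-> ->] /andP[-> ->]].
Qed.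

Lemma sigmaR_ge1 t : 1 <= sigma_min (Rm t) -> 1 <= sigmaR Rm.
Proof.
by move=> /sigma_min_ge1_specnorm R1; apply: le_trans R1 (le_bigmax _ _ t).
Qed.

End HorizonConstants.

Theorem lemma1 (R : realType) (n m q T N : nat) (act : 'I_m -> 'I_q)
  (Hact : forall j1 j2 : 'I_m, (j1 <= j2)%N -> (act j1 <= act j2)%N)
  (A : 'M[R]_n) (B : 'M[R]_(n, m))
  (Q Qf : 'I_T -> 'M[R]_n) (Rm : 'I_T -> 'M[R]_m)
  (HQ : forall t, psd (Q t)) (HQf : forall t, psd (Qf t)) (HR : forall t, pd (Rm t))
  (HQfpd : forall t, pd (Qf t))
  (HQsig : forall t, 1 <= sigma_min (Q t))
  (HRsig : forall t, 1 <= sigma_min (Rm t))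
  (S : {set 'I_q}) (t : 'I_T) (k : nat) (Hk : (1 <= k <= N)%N)
  (eps D : R) (Heps : 0 <= eps) (HD : 1 <= D) (HDe : D * eps <= 1 / 6)
  (Ahat : 'M[R]_n) (BShat : 'M[R]_(n, #|cols act S|))
  (HA : specnorm (A - Ahat) <= eps)
  (HB : specnorm (Bsel act S B - BShat) <= eps)
  (HP : specnorm (Pric A (Bsel act S B) (Rsel act S (Rm t)) (Q t) (Qf t) N k
                  - Pric Ahat BShat (Rsel act S (Rm t)) (Q t) (Qf t) N k) <= D * eps) :
  let Gt := 1 + @GammaS R n m q T N act S A B Q Qf Rm in
  specnorm (Kric A (Bsel act S B) (Rsel act S (Rm t)) (Q t) (Qf t) N k.-1
            - Kric Ahat BShat (Rsel act S (Rm t)) (Q t) (Qf t) N k.-1)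
    <= 3 * Gt ^+ 3 * D * eps /\
  specnorm (Pric A (Bsel act S B) (Rsel act S (Rm t)) (Q t) (Qf t) N k.-1
            - Pric Ahat BShat (Rsel act S (Rm t)) (Q t) (Qf t) N k.-1)
    <= 20 * Gt ^+ 9 * sigmaR Rm * D * eps.
Proof.
move=> Gt; set BS := Bsel act S B; set RS := Rsel act S (Rm t).
have [Ag Bg Pg Kg] := GammaS_ub act S A B Q Qf Rm t Hk.
have k0 : (0 < k)%N by case/andP: Hk.
rewrite !Kric_pred // !Pric_pred // in Kg *.
have BSg := le_trans (specnorm_Bsel act S B) Bg.
have RSI : qf_geI RS := qf_geI_Rsel (pd_sigma_min_qf_geI (HR t) (HRsig t)).
have Pnneg X Y : qf_nneg (Pric X Y RS (Q t) (Qf t) N k).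
  exact: riter_qf_nneg (psd_qf_nneg (HQ t)) (psd_qf_nneg (HQf t)) RSI.
have De0 : 0 <= D * eps by rewrite mulr_ge0 // (le_trans ler01).
have epsD : eps <= D * eps by rewrite ler_peMl.
have dA := le_trans HA epsD; have dB := le_trans HB epsD.
have P0 := Pnneg A BS; have Ph0 := Pnneg Ahat BShat.
split.
  rewrite -mulrA.
  exact: rgain_perturbation RSI P0 Ph0 Ag BSg Pg Kg De0 HDe dA dB HP.
apply: le_trans (rstep_perturbation _ RSI P0 Ph0 Ag BSg Pg Kg De0 HDe dA dB HP) _.
rewrite -/Gt.
have Gt0 : 0 <= Gt by rewrite addr_ge0 // (le_trans (specnorm_ge0 A)).
have := mulr_ge0 (exprn_ge0 9 Gt0) De0; have := sigmaR_ge1 (HRsig t).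
nra.
Qed.
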